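(* Let $S\subseteq\Sigma^n$ be a double-MDS-code and let $\gamma$ be the number of connected components of $G(S)$ (equivalently, the number of prime double-codes contained in $S$). (a) If $G(S)$ is bipartite, then $S$ contains exactly $2^\gamma$ distinct subsets that are $(n,2)_4$ MDS codes. (b) If $G(S)$ is not bipartite, then $S$ contains no $(n,2)_4$ MDS code.
   Context: Let $\Sigma=\{0,1,2,3\}$. An $i$-line of $\Sigma^n$ is a set of the four words that agree in all coordinates except the $i$th; a line is an $i$-line for some $i$. An $(n,2)_4$ MDS code is a set meeting every line in exactly one element. A double-code is a set meeting every line in $0$ or $2$ elements; a double-MDS-code is a set meeting every line in exactly $2$ elements; a double-code is complementable if contained in a double-MDS-code, and prime if complementable, nonempty and not partitionable into two or more nonempty double-codes. The adjacency graph $G(S)$ has vertex set $S$, two vertices being adjacent iff they differ in exactly one coordinate. *)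

From mathcomp Require Import all_boot.
Set Implicit Arguments. Unset Strict Implicit. Unset Printing Implicit Defensive.

(* Sigma = {0,1,2,3} = 'I_4 ; words of Sigma^n are finite functions 'I_n -> 'I_4 *)
Definition word (n : nat) := {ffun 'I_n -> 'I_4}.

Definition line n (i : 'I_n) (x : word n) : {set word n} :=
  [set y : word n | [forall j : 'I_n, (j != i) ==> (y j == x j)]].

Definition meets_every_line_in n (S : {set word n}) (k : nat) : bool :=
  [forall i : 'I_n, forall x : word n, #|S :&: line i x| == k].

Definition is_MDS n (S : {set word n}) : bool := meets_every_line_in S 1.

Definition is_double_MDS n (S : {set word n}) : bool := meets_every_line_in S 2.

Definition adjacent n (x y : word n) : bool := #|[set i : 'I_n | x i != y i]| == 1.

Definition GS_rel n (S : {set word n}) : rel (word n) :=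
  [rel x y | [&& x \in S, y \in S & adjacent x y]].

Definition component n (S : {set word n}) (x : word n) : {set word n} :=
  [set y in S | connect (GS_rel S) x y].

Definition num_components n (S : {set word n}) : nat :=
  #|[set component S x | x in S]|.

Definition bipartite n (S : {set word n}) : Prop :=
  exists c : word n -> bool,
    forall x y, x \in S -> y \in S -> adjacent x y -> c x != c y.

From mathcomp Require Import all_boot.

Set Implicit Arguments. Unset Strict Implicit. Unset Printing Implicit Defensive.

(* Every line meets a double-MDS-code S in an edge of G(S), and every edge of
   G(S) spans such a line intersection.  Hence a subset C of S meets every line
   exactly once iff membership in C is a proper 2-colouring of G(S).  Two
   proper 2-colourings of G(S) differ by a function that is constant on the
   connected components, so once one proper colouring exists, the MDS
   subcodes of S correspond bijectively to the sets of components on which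
   the colouring is flipped. *)

Lemma adjacent_sym n (x y : word n) : adjacent x y = adjacent y x.
Proof.
rewrite /adjacent (_ : [set i | x i != y i] = [set i | y i != x i]) //.
by apply/setP=> i; rewrite !inE eq_sym.
Qed.

Lemma adjacent_neq n (x y : word n) : adjacent x y -> x != y.
Proof.
apply: contraL => /eqP ->; rewrite /adjacent.
have -> : [set i : 'I_n | y i != y i] = set0 by apply/setP=> i; rewrite !inE eqxx.
by rewrite cards0.
Qed.

Lemma cardsI1 (T : finType) (C : {set T}) a : #|C :&: [set a]| = (a \in C).
Proof.
have [aC | aNC] := boolP (a \in C).
  by rewrite (setIidPr _) ?cards1 ?sub1set.
by rewrite setIC disjoint_setI0 ?cards0 ?disjoints1.
Qed.

Lemma cardsI2 (T : finType) (C : {set T}) a b : a != b ->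
  #|C :&: [set a; b]| = (a \in C) + (b \in C).
Proof.
move=> nab; rewrite setIUr cardsU !cardsI1 -setIIr.
by rewrite [[set a] :&: _]disjoint_setI0 ?setI0 ?cards0 ?subn0 // disjoints1 inE.
Qed.

Section DoubleMDS.

Variables (n : nat) (S : {set word n}).
Hypothesis S_double : is_double_MDS S.

Lemma double_MDS_edge_line a b : a \in S -> b \in S -> adjacent a b ->
  exists i, S :&: line i a = [set a; b].
Proof.
move=> aS bS ab; have nab := adjacent_neq ab.
move: (ab); rewrite /adjacent => /cards1P [i Di].
exists i; apply/eqP; rewrite eq_sym eqEcard.
move/forallP: S_double => /(_ i)/forallP/(_ a)/eqP ->.
rewrite cards2 nab andbT; apply/subsetP=> z.
rewrite !inE => /orP [] /eqP ->; rewrite ?aS ?bS /=;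
  apply/forallP=> j; apply/implyP=> ji //.
apply/negPn/negP=> abj.
have : j \in [set k | a k != b k] by rewrite inE eq_sym.
by rewrite Di inE (negbTE ji).
Qed.

Lemma double_MDS_line_edge i x : exists a b,
  [/\ a \in S, b \in S, adjacent a b & S :&: line i x = [set a; b]].
Proof.
move/forallP: S_double => /(_ i)/forallP/(_ x)/cards2P [a [b [nab Dab]]].
have : a \in S :&: line i x by rewrite Dab !inE eqxx.
have : b \in S :&: line i x by rewrite Dab !inE eqxx orbT.
rewrite !inE => /andP [bS /forallP lb] /andP [aS /forallP la].
have agree j : j != i -> a j = b j.
  by move=> ji; rewrite (eqP (implyP (la j) ji)) (eqP (implyP (lb j) ji)).
exists a, b; split=> //; apply/cards1P; exists i; apply/setP=> j; rewrite !inE.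
case: (eqVneq j i) => [->|/agree->]; last by rewrite eqxx.
apply: contra nab => /eqP abi; apply/eqP/ffunP=> k.
by case: (eqVneq k i) => [->|/agree].
Qed.

Definition proper_colouring (c : word n -> bool) :=
  forall x y, x \in S -> y \in S -> adjacent x y -> c x != c y.

Lemma subset_MDSP (C : {set word n}) : C \subset S ->
  is_MDS C <-> proper_colouring (fun x => x \in C).
Proof.
move=> CS; have CSI L : C :&: L = C :&: (S :&: L) by rewrite setIA (setIidPl CS).
split=> [/forallP MDS_C a b aS bS ab | colC].
  have [i Di] := double_MDS_edge_line aS bS ab.
  move/forallP: (MDS_C i) => /(_ a)/eqP.
  rewrite CSI Di cardsI2 ?adjacent_neq //=.
  by case: (a \in C); case: (b \in C).
apply/forallP=> i; apply/forallP=> x.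
have [a [b [aS bS ab Dab]]] := double_MDS_line_edge i x.
rewrite CSI Dab cardsI2 ?adjacent_neq //.
by move: (colC a b aS bS ab); case: (a \in C); case: (b \in C).
Qed.

End DoubleMDS.

Section Components.

Variables (n : nat) (S : {set word n}).

Lemma GS_rel_sym : symmetric (GS_rel S).
Proof. by move=> x y; rewrite /GS_rel /= adjacent_sym andbCA. Qed.

Lemma mem_component x : x \in S -> x \in component S x.
Proof. by move=> xS; rewrite inE xS connect0. Qed.

Lemma component_eqP x y : x \in S ->
  reflect (connect (GS_rel S) x y) (component S x == component S y).
Proof.
move=> xS; have csym := sym_connect_sym GS_rel_sym.
apply: (iffP eqP) => [Dx | cxy].
  by have := mem_component xS; rewrite Dx inE csym => /andP [].
apply/setP=> z; rewrite !inE; congr (_ && _); apply/idP/idP.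
  by apply: connect_trans; rewrite csym.
exact: connect_trans.
Qed.

Lemma component_adjacent a b : a \in S -> b \in S -> adjacent a b ->
  component S a = component S b.
Proof.
by move=> aS bS ab; apply/eqP/(component_eqP b aS)/connect1; rewrite /GS_rel /= aS bS.
Qed.

Lemma proper_colouring_addb_connect c1 c2 x y :
  proper_colouring S c1 -> proper_colouring S c2 ->
  connect (GS_rel S) x y -> c1 x (+) c2 x = c1 y (+) c2 y.
Proof.
move=> col1 col2; apply: (closed_connect (a := [pred z | c1 z (+) c2 z])) => u v.
case/and3P=> uS vS uv; move: (col1 u v uS vS uv) (col2 u v uS vS uv); rewrite !inE.
by case: (c1 u); case: (c1 v); case: (c2 u); case: (c2 v).
Qed.

Definition flip_components (c0 : word n -> bool) (T : {set {set word n}}) :=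
  [set x in S | c0 x (+) (component S x \in T)].

Variable c0 : word n -> bool.
Hypothesis c0_proper : proper_colouring S c0.

Lemma flip_components_subset T : flip_components c0 T \subset S.
Proof. by apply/subsetP=> x; rewrite inE => /andP []. Qed.

Lemma flip_components_proper T :
  proper_colouring S (fun x => x \in flip_components c0 T).
Proof.
move=> a b aS bS ab; rewrite !inE aS bS /= (component_adjacent aS bS ab).
by move: (c0_proper aS bS ab); case: (c0 a); case: (c0 b); case: (_ \in T).
Qed.

Lemma flip_components_onto (C : {set word n}) : C \subset S ->
  proper_colouring S (fun x => x \in C) ->
  exists2 T : {set {set word n}},
    T \subset [set component S x | x in S] & C = flip_components c0 T.
Proof.
move=> CS colC; pose d z := (z \in C) (+) c0 z.
exists [set component S x | x in [set x in S | d x]].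
  by apply: imsetS; apply/subsetP=> x; rewrite inE => /andP [].
apply/setP=> z; rewrite inE; have [zS | zNS] /= := boolP (z \in S); last first.
  by apply: contraNF zNS; apply: (subsetP CS).
have -> : (component S z \in [set component S x | x in [set x in S | d x]]) = d z.
  apply/imsetP/idP => [[y] | dz]; last by exists z; rewrite // inE zS.
  rewrite inE => /andP [yS dy] /eqP/(component_eqP y zS) czy.
  by rewrite /d (proper_colouring_addb_connect colC c0_proper czy).
by rewrite /d addbC addbK.
Qed.

Lemma flip_components_inj :
  {in powerset [set component S x | x in S] &, injective (flip_components c0)}.
Proof.
move=> T1 T2; rewrite !powersetE => /subsetP T1comps /subsetP T2comps D12.
apply/setP=> K.
have [/imsetP [x xS ->] | Kncomps] := boolP (K \in [set component S x | x in S]).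
  move/setP: D12 => /(_ x); rewrite !inE xS /=.
  by case: (c0 x); case: (_ \in T1); case: (_ \in T2).
by apply/idP/idP => [/T1comps | /T2comps]; rewrite (negbTE Kncomps).
Qed.

End Components.

Lemma MDS_subcodes_flip_components n (S : {set word n}) c0 :
  is_double_MDS S -> proper_colouring S c0 ->
  [set C : {set word n} | (C \subset S) && is_MDS C]
    = flip_components S c0 @: powerset [set component S x | x in S].
Proof.
move=> S_double c0_proper; apply/setP=> C; rewrite inE.
apply/andP/imsetP => [[CS /(subset_MDSP S_double CS)] | [T _ ->]].
  by case/(flip_components_onto c0_proper CS) => T; exists T; rewrite ?powersetE.
split; first exact: flip_components_subset.
by apply/(subset_MDSP S_double (flip_components_subset _ _ _))/flip_components_proper.
Qed.

Theorem proposition5 (n : nat) (S : {set word n}) :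
  is_double_MDS S ->
  (bipartite S ->
     #|[set C : {set word n} | (C \subset S) && is_MDS C]| = 2 ^ num_components S)
  /\
  (~ bipartite S -> forall C : {set word n}, C \subset S -> ~~ is_MDS C).
Proof.
move=> S_double; split=> [[c0 c0_proper] | Snbip C CS].
  rewrite (MDS_subcodes_flip_components S_double c0_proper).
  by rewrite card_in_imset ?card_powerset //; apply: flip_components_inj.
apply/negP=> /(subset_MDSP S_double CS) colC; apply: Snbip.
by exists (fun x => x \in C).
Qed.
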